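(* Let $\tau\in\mathbb{C}$. The functional $I_{\overline{\mathcal{T}}}:\phi\mapsto\beta_{f_\phi}(\tau)$ is continuous on $\overline{\mathcal{T}}$ (closure taken in the Banach space $E_1$).
   Context: $\Delta$ is the unit disk. $E_1$ is the Banach space of analytic $\phi$ on $\Delta$ with $\|\phi\|_{E_1}=\sup_{z\in\Delta}|\phi(z)|(1-|z|^2)<\infty$. For locally univalent $f$, $N_f=f''/f'$. $\mathcal{S}_q$ is the class of bounded univalent $f$ on $\Delta$ with $f(0)=0,f'(0)=1$ admitting a quasiconformal extension to $\widehat{\mathbb{C}}$. $\mathcal{T}=\{N_f:f\in\mathcal{S}_q\}\subset E_1$ and $\overline{\mathcal{T}}$ is its closure in $E_1$. For $\phi\in\overline{\mathcal{T}}$, $f_\phi(z)=\int_0^z\exp\left(\int_0^\zeta\phi(w)dw\right)d\zeta$; this is univalent in $\Delta$ with $f_\phi(0)=0,f_\phi'(0)=1$ and $N_{f_\phi}=\phi$. For such $f$ and $\tau\in\mathbb{C}$, $[f'(z)]^\tau=\exp(\tau\log f'(z))$ with $\log f'(0)=0$, and $\beta_f(\tau)=\limsup_{r\to1^-}\frac{\log\int_{-\pi}^{\pi}|[f'(re^{i\theta})]^\tau|d\theta}{|\log(1-r)|}$. *)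

From Stdlib Require Import Reals.
From Coquelicot Require Import Coquelicot.
Open Scope R_scope.

Definition Disk (z : C) : Prop := Cmod z < 1.

Definition cexp (z : C) : C :=
  (exp (fst z) * cos (snd z), exp (fst z) * sin (snd z)).

Definition polar (r th : R) : C := (r * cos th, r * sin th).

Definition CRInt (f : R -> C) (a b : R) : C :=
  (RInt (fun t => fst (f t)) a b, RInt (fun t => snd (f t)) a b).

Definition holo_disk (f : C -> C) : Prop :=
  forall z : C, Disk z -> ex_derive f z.

Definition E1norm (phi : C -> C) : Rbar :=
  Lub_Rbar (fun x => exists z, Disk z /\ x = Cmod (phi z) * (1 - Cmod z ^ 2)).

Definition InE1 (phi : C -> C) : Prop := holo_disk phi /\ is_finite (E1norm phi).

Definition E1dist (phi psi : C -> C) : Rbar :=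
  E1norm (fun z => (phi z - psi z)%C).

(* ---------- Riemann sphere  C ∪ {oo} = option C, chordal metric ---------- *)
Definition chord (p q : option C) : R :=
  match p, q with
  | Some z, Some w => 2 * Cmod (z - w)%C / sqrt ((1 + Cmod z ^ 2) * (1 + Cmod w ^ 2))
  | Some z, None | None, Some z => 2 / sqrt (1 + Cmod z ^ 2)
  | None, None => 0
  end.

Definition sph_continuous (F : option C -> option C) : Prop :=
  forall p (eps : R), 0 < eps -> exists d, 0 < d /\
    forall q, chord p q < d -> chord (F p) (F q) < eps.

Definition sph_homeo (F : option C -> option C) : Prop :=
  exists G : option C -> option C,
    (forall p, G (F p) = p) /\ (forall p, F (G p) = p) /\
    sph_continuous F /\ sph_continuous G.

(* Metric definition of quasiconformality (Väisälä): the linear dilatation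
   H(z,F) = limsup_{r->0} max_{|w-z|=r}|F w - F z| / min_{|w-z|=r}|F w - F z|
   is bounded on C \ F^{-1}(oo); written out with an explicit constant. *)
Definition sph_qc (F : option C -> option C) : Prop :=
  exists K : R, forall z a, F (Some z) = Some a ->
    exists r0, 0 < r0 /\ forall r, 0 < r < r0 ->
      forall w1 w2, Cmod (w1 - z)%C = r -> Cmod (w2 - z)%C = r ->
        exists a1 a2, F (Some w1) = Some a1 /\ F (Some w2) = Some a2 /\
          Cmod (a1 - a)%C <= K * Cmod (a2 - a)%C.

Definition Sq (f : C -> C) : Prop :=
  holo_disk f /\
  (forall z w, Disk z -> Disk w -> f z = f w -> z = w) /\
  (exists M, forall z, Disk z -> Cmod (f z) <= M) /\
  f (RtoC 0) = RtoC 0 /\ is_derive f (RtoC 0) (RtoC 1) /\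
  exists F : option C -> option C,
    sph_homeo F /\ sph_qc F /\ forall z, Disk z -> F (Some z) = Some (f z).

Definition IsN (f psi : C -> C) : Prop :=
  exists f1 f2 : C -> C, forall z, Disk z ->
    is_derive f z (f1 z) /\ is_derive f1 z (f2 z) /\ psi z = (f2 z / f1 z)%C.

Definition Tset (psi : C -> C) : Prop := exists f, Sq f /\ IsN f psi.

Definition Tclos (phi : C -> C) : Prop :=
  InE1 phi /\ forall eps : R, 0 < eps ->
    exists psi, Tset psi /\ Rbar_lt (E1dist psi phi) (Finite eps).

(* g_phi(z) = int_0^z phi(w) dw  (along the segment [0,z]) *)
Definition gphi (phi : C -> C) (z : C) : C :=
  CRInt (fun t => (phi (RtoC t * z) * z)%C) 0 1.

(* f_phi(z) = int_0^z exp(g_phi(zeta)) dzeta ; so f_phi' = exp(g_phi),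
   and g_phi is the branch of log f_phi' with value 0 at 0. *)
Definition fphi (phi : C -> C) (z : C) : C :=
  CRInt (fun s => (cexp (gphi phi (RtoC s * z)) * z)%C) 0 1.

Definition limsup_left1 (h : R -> R) : Rbar :=
  Glb_Rbar (fun y => exists d, 0 < d /\
     Lub_Rbar (fun x => exists r, 1 - d < r < 1 /\ x = h r) = Finite y).

(* beta_f(tau), given L = log f' (branch with L 0 = 0):
   limsup_{r->1^-} log( int_{-pi}^{pi} |exp(tau L(r e^{i th}))| dth ) / |log(1-r)| *)
Definition beta_log (L : C -> C) (tau : C) : Rbar :=
  limsup_left1 (fun r =>
    ln (RInt (fun th => Cmod (cexp (tau * L (polar r th))%C)) (- PI) PI)
    / Rabs (ln (1 - r))).

(* I(phi) = beta_{f_phi}(tau), using log f_phi' = g_phi *)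
Definition Ifun (tau : C) (phi : C -> C) : Rbar := beta_log (gphi phi) tau.

Definition Rbar_nbhd (l : Rbar) (P : Rbar -> Prop) : Prop :=
  match l with
  | Finite x => exists eps, 0 < eps /\ forall y : R, Rabs (y - x) < eps -> P (Finite y)
  | p_infty => exists M : R, forall y : Rbar, Rbar_lt (Finite M) y -> P y
  | m_infty => exists M : R, forall y : Rbar, Rbar_lt y (Finite M) -> P y
  end.

(* Write g_phi = log f_phi'. If |phi1 - phi2| (1 - |w|^2) <= d on the disk, integrating along
   [0, z] gives |g_phi1(z) - g_phi2(z)| <= d log (1 / (1 - |z|)). On the circle |z| = r the
   integrands |exp (tau g_phi_i)| of the integral means therefore differ at most by the factor
   (1 - r)^(- |tau| d), so the quotients whose limsup is beta differ at most by |tau| d for every r,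
   and so do their limsups. Thus phi |-> beta_{f_phi}(tau) is |tau|-Lipschitz from the E_1 distance
   to the extended reals, in particular continuous. *)

From Stdlib Require Import Reals Lra.
From Coquelicot Require Import Coquelicot.
Open Scope R_scope.

Lemma continuous_C_AbsRing {U : UniformSpace} (f : U -> C) x :
  @continuous U (AbsRing_UniformSpace C_AbsRing) f x <-> continuous f x.
Proof. split; intros H P HP; apply H, locally_C, HP. Qed.

Lemma continuous_Cmult {U : UniformSpace} (f g : U -> C) x :
  continuous f x -> continuous g x -> continuous (fun y => (f y * g y)%C) x.
Proof.
  intros Hf Hg. apply continuous_C_AbsRing.
  apply (continuous_mult (K := C_AbsRing)); apply continuous_C_AbsRing; assumption.
Qed.

Lemma continuous_pair {T U V : UniformSpace} (f : T -> U) (g : T -> V) x :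
  continuous f x -> continuous g x -> continuous (fun y => (f y, g y)) x.
Proof.
  intros Hf Hg P [eps HP]. unfold filtermap.
  apply (filter_imp (fun y => ball (f x) eps (f y) /\ ball (g x) eps (g y))).
  - intros y [H1 H2]. apply HP. split; assumption.
  - apply filter_and; [apply Hf | apply Hg]; apply locally_ball.
Qed.

Lemma continuous_Cfst {U : UniformSpace} (F : U -> C) x :
  continuous F x -> continuous (fun y => fst (F y)) x.
Proof.
  intros HF P [eps HP]. apply (HF (fun w => P (fst w))).
  exists eps. intros y [H _]. apply HP, H.
Qed.

Lemma continuous_Csnd {U : UniformSpace} (F : U -> C) x :
  continuous F x -> continuous (fun y => snd (F y)) x.
Proof.
  intros HF P [eps HP]. apply (HF (fun w => P (snd w))).
  exists eps. intros y [_ H]. apply HP, H.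
Qed.

Lemma continuous_RtoC {U : UniformSpace} (f : U -> R) x :
  continuous f x -> continuous (fun y => RtoC (f y)) x.
Proof. intros Hf. apply continuous_pair; [exact Hf | apply continuous_const]. Qed.

Lemma continuous_polar (r th : R) : continuous (polar r) th.
Proof.
  apply continuous_pair.
  - apply (ex_derive_continuous (fun v => r * cos v)). auto_derive. trivial.
  - apply (ex_derive_continuous (fun v => r * sin v)). auto_derive. trivial.
Qed.

Lemma ex_derive_continuous_C (f : C -> C) z : ex_derive f z -> continuous f z.
Proof. intros H P HP. apply locally_C, (ex_derive_continuous f z H), HP. Qed.

Lemma Cmod_cexp w : Cmod (cexp w) = exp (fst w).
Proof.
  unfold cexp, Cmod; simpl.
  replace (_ * _ + _ * _) with (Rsqr (exp (fst w)) * (Rsqr (sin (snd w)) + Rsqr (cos (snd w))))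
    by (unfold Rsqr; ring).
  rewrite sin2_cos2, Rmult_1_r. apply sqrt_Rsqr, Rlt_le, exp_pos.
Qed.

Lemma Cmod_polar r th : Cmod (polar r th) = Rabs r.
Proof.
  unfold polar, Cmod; simpl.
  replace (_ * _ + _ * _) with (Rsqr r * (Rsqr (sin th) + Rsqr (cos th))) by (unfold Rsqr; ring).
  rewrite sin2_cos2, Rmult_1_r. apply sqrt_Rsqr_abs.
Qed.

Lemma continuous_Cmod_cexp {U : UniformSpace} (F : U -> C) x :
  continuous F x -> continuous (fun y => Cmod (cexp (F y))) x.
Proof.
  intros HF. apply (continuous_ext (fun y => exp (fst (F y)))).
  { intros y. symmetry. apply Cmod_cexp. }
  apply (continuous_comp (fun y => fst (F y)) exp).
  - apply continuous_Cfst, HF.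
  - apply (ex_derive_continuous exp). auto_derive. trivial.
Qed.

(* C as a normed R-module, in which Coquelicot's integral is computed componentwise like CRInt *)
Notation R2 := (prod_NormedModule R_AbsRing R_NormedModule R_NormedModule).

Lemma Cmod_norm_R2 (z : C) : Cmod z = @norm R_AbsRing R2 z.
Proof.
  destruct z as [x y]. unfold Cmod, norm; simpl. unfold prod_norm, norm; simpl.
  change (abs x) with (Rabs x). change (abs y) with (Rabs y).
  rewrite !Rmult_1_r, <- !Rabs_mult, !(Rabs_pos_eq (_ * _)) by nra. reflexivity.
Qed.

Lemma is_RInt_CRInt (f : R -> C) (a b : R) : a <= b ->
  (forall t, a <= t <= b -> continuous f t) -> @is_RInt R2 f a b (CRInt f a b).
Proof.
  intros Hab Hf.
  assert (Hc : forall t, Rmin a b <= t <= Rmax a b -> continuous f t).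
  { rewrite Rmin_left, Rmax_right by lra. exact Hf. }
  apply is_RInt_fct_extend_pair; apply (RInt_correct (V := R_CompleteNormedModule));
    apply ex_RInt_continuous; intros t Ht.
  - apply continuous_Cfst, Hc, Ht.
  - apply continuous_Csnd, Hc, Ht.
Qed.

Lemma continuous_gphi_integrand {U : UniformSpace} (phi : C -> C) (T : U -> R) (Z : U -> C) x :
  holo_disk phi -> 0 <= T x <= 1 -> Cmod (Z x) < 1 -> continuous T x -> continuous Z x ->
  continuous (fun y => (phi (RtoC (T y) * Z y) * Z y)%C) x.
Proof.
  intros Hphi HT HZ HTc HZc. apply continuous_Cmult; [|exact HZc].
  apply (continuous_comp (fun y => RtoC (T y) * Z y)%C phi).
  - apply continuous_Cmult; [apply continuous_RtoC|]; assumption.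
  - apply ex_derive_continuous_C, Hphi. unfold Disk.
    rewrite Cmod_mult, Cmod_R, Rabs_pos_eq by lra. pose proof (Cmod_ge_0 (Z x)). nra.
Qed.

Lemma is_RInt_gphi (phi : C -> C) (z : C) : holo_disk phi -> Cmod z < 1 ->
  @is_RInt R2 (fun t => phi (RtoC t * z) * z)%C 0 1 (gphi phi z).
Proof.
  intros Hphi Hz. apply is_RInt_CRInt; [lra|]. intros t Ht.
  apply (continuous_gphi_integrand phi (fun t => t) (fun _ => z)); trivial.
  - apply continuous_id.
  - apply continuous_const.
Qed.

Lemma is_RInt_log_kernel (s : R) : 0 <= s < 1 ->
  is_RInt (fun t => s / (1 - t * s)) 0 1 (- ln (1 - s)).
Proof.
  intros Hs.
  replace (- ln (1 - s)) with (minus (- ln (1 - 1 * s)) (- ln (1 - 0 * s)))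
    by (unfold minus, plus, opp; simpl; rewrite Rmult_0_l, Rminus_0_r, ln_1, Rmult_1_l; ring).
  apply (is_RInt_derive (fun t => - ln (1 - t * s))); rewrite Rmin_left, Rmax_right by lra;
    intros t Ht.
  - auto_derive; [nra|]. field. nra.
  - apply (ex_derive_continuous (fun t => s / (1 - t * s))). auto_derive. nra.
Qed.

Lemma Cmod_gphi_integrand_sub_le (phi1 phi2 : C -> C) (d t : R) (z : C) :
  (forall w, Disk w -> Cmod (phi1 w - phi2 w)%C * (1 - Cmod w ^ 2) <= d) ->
  Cmod z < 1 -> 0 <= t <= 1 ->
  Cmod (phi1 (RtoC t * z) * z - phi2 (RtoC t * z) * z)%C <= d * (Cmod z / (1 - t * Cmod z)).
Proof.
  intros Hd Hz Ht. set (s := Cmod z) in *.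
  assert (Hs : 0 <= s) by apply Cmod_ge_0.
  assert (Hts : 0 <= t * s < 1).
  { split; [apply Rmult_le_pos; lra|].
    apply Rle_lt_trans with s; [|exact Hz]. rewrite <- (Rmult_1_l s) at 2.
    apply Rmult_le_compat_r; lra. }
  assert (Htz : Disk (RtoC t * z)%C).
  { unfold Disk. rewrite Cmod_mult, Cmod_R, Rabs_pos_eq by lra. exact (proj2 Hts). }
  specialize (Hd _ Htz). rewrite Cmod_mult, Cmod_R, Rabs_pos_eq in Hd by lra. fold s in Hd.
  replace (phi1 (RtoC t * z) * z - phi2 (RtoC t * z) * z)%C
    with ((phi1 (RtoC t * z) - phi2 (RtoC t * z)) * z)%C by ring.
  rewrite Cmod_mult. fold s.
  set (D := Cmod (phi1 (RtoC t * z) - phi2 (RtoC t * z))%C) in *.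
  assert (HD : 0 <= D) by apply Cmod_ge_0.
  replace (d * (s / (1 - t * s))) with (d / (1 - t * s) * s) by (field; lra).
  apply Rmult_le_compat_r; [exact Hs|].
  apply Rle_div_r; [lra|].
  (* only 1 - |w|^2 >= 1 - |w| is used of the E_1 weight *)
  assert (Hsq : (t * s) ^ 2 <= t * s).
  { simpl. rewrite Rmult_1_r. rewrite <- (Rmult_1_r (t * s)) at 3.
    apply Rmult_le_compat_l; lra. }
  apply Rle_trans with (D * (1 - (t * s) ^ 2)); [|exact Hd].
  apply Rmult_le_compat_l; lra.
Qed.

Lemma Cmod_gphi_sub_le (phi1 phi2 : C -> C) (d : R) (z : C) :
  holo_disk phi1 -> holo_disk phi2 ->
  (forall w, Disk w -> Cmod (phi1 w - phi2 w)%C * (1 - Cmod w ^ 2) <= d) ->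
  Cmod z < 1 -> Cmod (gphi phi1 z - gphi phi2 z)%C <= d * - ln (1 - Cmod z).
Proof.
  intros H1 H2 Hd Hz.
  rewrite Cmod_norm_R2.
  apply (norm_RInt_le (fun t => minus (phi1 (RtoC t * z) * z)%C (phi2 (RtoC t * z) * z)%C)
           (fun t => scal d (Cmod z / (1 - t * Cmod z))) 0 1
           (minus (gphi phi1 z) (gphi phi2 z))); [lra | | |].
  - intros t Ht. rewrite <- Cmod_norm_R2. apply Cmod_gphi_integrand_sub_le; assumption.
  - apply (is_RInt_minus (V := R2)); apply is_RInt_gphi; assumption.
  - apply (is_RInt_scal (V := R_NormedModule)), is_RInt_log_kernel.
    split; [apply Cmod_ge_0 | exact Hz].
Qed.

Lemma continuity_2d_pt_continuous_l (F : R -> R -> R) t th :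
  continuity_2d_pt F t th -> continuous (fun u => F u th) t.
Proof.
  intros H. apply continuity_2d_pt_filterlim in H.
  apply (continuous_comp (fun u => (u, th)) (fun p => F (fst p) (snd p))); [|exact H].
  apply continuous_pair; [apply continuous_id | apply continuous_const].
Qed.

Lemma continuous_RInt_param (F : R -> R -> R) (a b th0 : R) : a <= b ->
  (forall t th, a <= t <= b -> continuity_2d_pt F t th) ->
  continuous (fun th => RInt (fun t => F t th) a b) th0.
Proof.
  intros Hab HF.
  assert (Hint : forall th, ex_RInt (fun t => F t th) a b).
  { intros th. apply (ex_RInt_continuous (V := R_CompleteNormedModule)).
    rewrite Rmin_left, Rmax_right by lra. intros t Ht.
    apply continuity_2d_pt_continuous_l, HF, Ht. }
  apply filterlim_locally. intros eps.
  assert (He : 0 < eps / (b - a + 1)) by (apply Rdiv_lt_0_compat; [apply cond_pos | lra]).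
  destruct (uniform_continuity_2d_1d F a b th0 (fun t Ht => HF t th0 Ht) (mkposreal _ He))
    as [delta Hdelta].
  exists delta. intros th Hth.
  change (Rabs (minus (RInt (fun t => F t th) a b) (RInt (fun t => F t th0) a b)) < eps).
  rewrite <- (RInt_minus (V := R_CompleteNormedModule)) by apply Hint.
  apply Rle_lt_trans with ((b - a) * (eps / (b - a + 1))).
  - apply abs_RInt_le_const;
      [exact Hab | apply (ex_RInt_minus (V := R_CompleteNormedModule)); apply Hint |].
    intros t Ht. apply Rlt_le.
    assert (Hth' : Rabs (th - th0) < delta) by exact Hth.
    apply Rabs_lt_between' in Hth'. pose proof (cond_pos delta).
    apply (Hdelta t th0 t th Ht); [lra | exact Ht | lra | rewrite Rminus_eq_0, Rabs_R0; lra].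
  - pose proof (cond_pos eps).
    apply Rmult_lt_reg_r with (b - a + 1); [lra|].
    replace ((b - a) * (eps / (b - a + 1)) * (b - a + 1)) with ((b - a) * eps) by (field; lra).
    nra.
Qed.

Lemma continuous_CRInt_param (G : R -> R -> C) (a b th0 : R) : a <= b ->
  (forall t th, a <= t <= b -> continuous (fun p : R * R => G (fst p) (snd p)) (t, th)) ->
  continuous (fun th => CRInt (fun t => G t th) a b) th0.
Proof.
  intros Hab HG. apply continuous_pair; apply continuous_RInt_param; trivial;
    intros t th Ht; apply continuity_2d_pt_filterlim.
  - apply (continuous_Cfst (fun p : R * R => G (fst p) (snd p))), HG, Ht.
  - apply (continuous_Csnd (fun p : R * R => G (fst p) (snd p))), HG, Ht.
Qed.

Definition continuous_on_circle (L : C -> C) (r : R) : Prop :=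
  forall th, continuous (fun th => L (polar r th)) th.

Lemma continuous_on_circle_gphi (phi : C -> C) (r : R) : holo_disk phi -> Rabs r < 1 ->
  continuous_on_circle (gphi phi) r.
Proof.
  intros Hphi Hr th0.
  apply (continuous_CRInt_param (fun t th => phi (RtoC t * polar r th) * polar r th)%C);
    [lra|]. intros t th Ht.
  apply (continuous_gphi_integrand phi fst (fun p => polar r (snd p))); trivial.
  - simpl. rewrite Cmod_polar. exact Hr.
  - apply continuous_fst.
  - apply (continuous_comp snd (polar r)); [apply continuous_snd | apply continuous_polar].
Qed.

Definition circle_integral (tau : C) (L : C -> C) (r : R) : R :=
  RInt (fun th => Cmod (cexp (tau * L (polar r th))%C)) (- PI) PI.

Definition beta_quotient (L : C -> C) (tau : C) (r : R) : R :=
  ln (circle_integral tau L r) / Rabs (ln (1 - r)).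

Lemma Cmod_cexp_le (a b : C) (B : R) :
  Cmod (a - b)%C <= B -> Cmod (cexp a) <= exp B * Cmod (cexp b).
Proof.
  intros HB. rewrite !Cmod_cexp, <- exp_plus.
  assert (H : fst a <= B + fst b).
  { pose proof (re_le_Cmod (a - b)%C) as Hre. pose proof (Rle_abs (Re (a - b)%C)).
    unfold Re in *. destruct a, b; simpl in *. lra. }
  destruct H as [H | ->]; [apply Rlt_le, exp_increasing, H | apply Rle_refl].
Qed.

Lemma continuous_circle_integrand (tau : C) (L : C -> C) (r th : R) :
  continuous_on_circle L r -> continuous (fun th => Cmod (cexp (tau * L (polar r th))%C)) th.
Proof.
  intros HL. apply continuous_Cmod_cexp, continuous_Cmult; [apply continuous_const | apply HL].
Qed.

Lemma ex_RInt_circle_integrand (tau : C) (L : C -> C) (r : R) : continuous_on_circle L r ->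
  ex_RInt (fun th => Cmod (cexp (tau * L (polar r th))%C)) (- PI) PI.
Proof.
  intros HL. apply (ex_RInt_continuous (V := R_CompleteNormedModule)).
  intros th _. apply continuous_circle_integrand, HL.
Qed.

Lemma circle_integral_gt_0 (tau : C) (L : C -> C) (r : R) :
  continuous_on_circle L r -> 0 < circle_integral tau L r.
Proof.
  intros HL. pose proof PI_RGT_0. apply RInt_gt_0; [lra | |].
  - intros th _. rewrite Cmod_cexp. apply exp_pos.
  - intros th _. apply continuous_circle_integrand, HL.
Qed.

Lemma circle_integral_le_exp (tau : C) (L1 L2 : C -> C) (r B : R) :
  continuous_on_circle L1 r -> continuous_on_circle L2 r ->
  (forall th, Cmod (L1 (polar r th) - L2 (polar r th))%C <= B) ->
  circle_integral tau L1 r <= exp (Cmod tau * B) * circle_integral tau L2 r.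
Proof.
  intros HL1 HL2 HB. unfold circle_integral.
  rewrite <- (RInt_scal (V := R_CompleteNormedModule)) by (apply ex_RInt_circle_integrand, HL2).
  pose proof PI_RGT_0.
  apply RInt_le; [lra | apply ex_RInt_circle_integrand, HL1 | |].
  - apply (ex_RInt_scal (V := R_CompleteNormedModule)), ex_RInt_circle_integrand, HL2.
  - intros th _. apply Cmod_cexp_le.
    replace (tau * L1 (polar r th) - tau * L2 (polar r th))%C
      with (tau * (L1 (polar r th) - L2 (polar r th)))%C by ring.
    rewrite Cmod_mult. apply Rmult_le_compat_l; [apply Cmod_ge_0 | apply HB].
Qed.

Lemma beta_quotient_le_plus (L1 L2 : C -> C) (tau : C) (K r : R) : 0 < r < 1 ->
  continuous_on_circle L1 r -> continuous_on_circle L2 r ->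
  (forall th, Cmod (L1 (polar r th) - L2 (polar r th))%C <= K * - ln (1 - r)) ->
  beta_quotient L1 tau r <= beta_quotient L2 tau r + Cmod tau * K.
Proof.
  intros Hr HL1 HL2 HK. unfold beta_quotient.
  set (l := - ln (1 - r)) in *.
  assert (Hl : 0 < l).
  { assert (ln (1 - r) < ln 1) by (apply ln_increasing; lra). rewrite ln_1 in *. unfold l. lra. }
  replace (Rabs (ln (1 - r))) with l by (unfold l in *; rewrite Rabs_left; lra).
  pose proof (circle_integral_gt_0 tau L1 r HL1) as Hpos1.
  pose proof (circle_integral_gt_0 tau L2 r HL2) as Hpos2.
  assert (Hln : ln (circle_integral tau L1 r)
                <= Cmod tau * (K * l) + ln (circle_integral tau L2 r)).
  { rewrite <- (ln_exp (Cmod tau * (K * l))), <- ln_mult by (apply exp_pos || exact Hpos2).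
    apply ln_le; [exact Hpos1 | apply circle_integral_le_exp; assumption]. }
  replace (ln (circle_integral tau L2 r) / l + Cmod tau * K)
    with ((Cmod tau * (K * l) + ln (circle_integral tau L2 r)) / l) by (field; lra).
  apply Rmult_le_compat_r; [apply Rlt_le, Rinv_0_lt_compat, Hl | exact Hln].
Qed.

Lemma Glb_Rbar_le_plus (S1 S2 : R -> Prop) (c : R) :
  (forall y, S2 y -> exists y', S1 y' /\ y' <= y + c) ->
  Rbar_le (Glb_Rbar S1) (Rbar_plus (Glb_Rbar S2) c).
Proof.
  intros H. destruct (Glb_Rbar_correct S1) as [Hlb1 _]. destruct (Glb_Rbar_correct S2) as [_ Hglb2].
  assert (Hlb : is_lb_Rbar S2 (Rbar_minus (Glb_Rbar S1) c)).
  { intros y Hy. destruct (H y Hy) as [y' [Hy' Hle]]. specialize (Hlb1 y' Hy').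
    destruct (Glb_Rbar S1); simpl in *; trivial; lra. }
  specialize (Hglb2 _ Hlb).
  destruct (Glb_Rbar S1), (Glb_Rbar S2); simpl in *; trivial; lra.
Qed.

Lemma limsup_left1_le_plus (h1 h2 : R -> R) (c : R) :
  (forall r, 0 < r < 1 -> h1 r <= h2 r + c) ->
  Rbar_le (limsup_left1 h1) (Rbar_plus (limsup_left1 h2) c).
Proof.
  intros H. apply Glb_Rbar_le_plus. intros y [d [Hd Hsup2]].
  (* limsup_left1 only sees finite suprema; with d1 <= 1 the radius 1 - d1 / 2 lies in (0, 1),
     which bounds the supremum of h1 from below *)
  set (d1 := Rmin d 1).
  assert (Hd1 : 0 < d1 <= d /\ d1 <= 1)
    by (unfold d1; split; [split; [apply Rmin_glb_lt; lra | apply Rmin_l] | apply Rmin_r]).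
  set (S1 := fun x => exists r, 1 - d1 < r < 1 /\ x = h1 r).
  destruct (Lub_Rbar_correct S1) as [Hub1 Hlub1].
  destruct (Lub_Rbar_correct (fun x => exists r, 1 - d < r < 1 /\ x = h2 r)) as [Hub2 _].
  rewrite Hsup2 in Hub2.
  assert (Hup : Rbar_le (Lub_Rbar S1) (y + c)).
  { apply Hlub1. intros x [r [Hr ->]].
    assert (Hr2 : Rbar_le (h2 r) y) by (apply Hub2; exists r; split; [lra | reflexivity]).
    specialize (H r ltac:(lra)). simpl in *. lra. }
  assert (Hlow : Rbar_le (h1 (1 - d1 / 2)) (Lub_Rbar S1))
    by (apply Hub1; exists (1 - d1 / 2); split; [lra | reflexivity]).
  destruct (Lub_Rbar S1) as [l | |] eqn:El; simpl in Hup, Hlow; try contradiction.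
  exists l. split; [|exact Hup]. exists d1. split; [lra | exact El].
Qed.

Lemma E1dist_lt_bound (phi psi : C -> C) (d : R) : Rbar_lt (E1dist phi psi) d ->
  forall w, Disk w -> Cmod (phi w - psi w)%C * (1 - Cmod w ^ 2) <= d.
Proof.
  intros H w Hw. unfold E1dist, E1norm in H.
  destruct (Lub_Rbar_correct (fun x => exists z, Disk z /\
              x = Cmod (phi z - psi z)%C * (1 - Cmod z ^ 2))) as [Hub _].
  specialize (Hub _ (ex_intro _ w (conj Hw eq_refl))).
  destruct (Lub_Rbar _); simpl in *; try contradiction; lra.
Qed.

Lemma Ifun_le_plus (tau : C) (phi1 phi2 : C -> C) (d : R) :
  holo_disk phi1 -> holo_disk phi2 ->
  (forall w, Disk w -> Cmod (phi1 w - phi2 w)%C * (1 - Cmod w ^ 2) <= d) ->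
  Rbar_le (Ifun tau phi1) (Rbar_plus (Ifun tau phi2) (Cmod tau * d)).
Proof.
  intros H1 H2 Hd. apply limsup_left1_le_plus. intros r Hr.
  assert (Hr' : Rabs r < 1) by (rewrite Rabs_pos_eq; lra).
  apply (beta_quotient_le_plus (gphi phi1) (gphi phi2)); trivial.
  - apply continuous_on_circle_gphi; assumption.
  - apply continuous_on_circle_gphi; assumption.
  - intros th. pose proof (Cmod_gphi_sub_le phi1 phi2 d (polar r th) H1 H2 Hd) as Hg.
    rewrite Cmod_polar, Rabs_pos_eq in Hg by lra. apply Hg. lra.
Qed.

Lemma Rbar_nbhd_close (l : Rbar) (P : Rbar -> Prop) : Rbar_nbhd l P ->
  exists eps, 0 < eps /\ forall (y : Rbar) (c : R), 0 <= c < eps ->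
    Rbar_le y (Rbar_plus l c) -> Rbar_le l (Rbar_plus y c) -> P y.
Proof.
  destruct l as [x | |]; simpl.
  - intros [eps [Heps HP]]. exists eps. split; [exact Heps|].
    intros [y | |] c Hc; simpl; try contradiction.
    intros H1 H2. apply HP. apply Rabs_lt_between'. lra.
  - intros [M HP]. exists 1. split; [lra|].
    intros [y | |] c Hc; simpl; try contradiction. intros _ _. apply HP. exact I.
  - intros [M HP]. exists 1. split; [lra|].
    intros [y | |] c Hc; simpl; try contradiction. intros _ _. apply HP. exact I.
Qed.

Theorem theorem3 (tau : C) :
  forall phi0 : C -> C, Tclos phi0 ->
  forall P : Rbar -> Prop, Rbar_nbhd (Ifun tau phi0) P ->
  exists delta : R, 0 < delta /\
    forall phi : C -> C, Tclos phi ->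
      Rbar_lt (E1dist phi phi0) (Finite delta) -> P (Ifun tau phi).
Proof.
  intros phi0 [[Hphi0 _] _] P HP.
  destruct (Rbar_nbhd_close _ _ HP) as [eps [Heps HPeps]].
  pose proof (Cmod_ge_0 tau) as Htau.
  set (delta := eps / (Cmod tau + 1)).
  assert (Hdelta : 0 < delta) by (apply Rdiv_lt_0_compat; lra).
  exists delta. split; [exact Hdelta|].
  intros phi [[Hphi _] _] Hdist.
  pose proof (E1dist_lt_bound _ _ _ Hdist) as Hb.
  apply (HPeps _ (Cmod tau * delta)).
  - assert (delta * (Cmod tau + 1) = eps) by (unfold delta; field; lra).
    split; nra.
  - apply Ifun_le_plus; assumption.
  - apply Ifun_le_plus; trivial. intros w Hw.
    rewrite <- Cmod_opp, Copp_minus_distr. apply Hb, Hw.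
Qed.
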